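(* Let $g>0$, $k_1,k_2,\omega\in\mathbb{R}$ with $k_2<0<k_1$, and consider the undamped system $$\ddot x-2\omega\dot y+(gk_1-\omega^2)x=0,\qquad \ddot y+2\omega\dot x+(gk_2-\omega^2)y=0.$$ (i) If $k_1>-k_2$, then all eigenvalues of this system are purely imaginary and simple if and only if $\omega^2>gk_1$. (ii) If $k_1<-k_2$ and $3k_1+k_2>0$, then all eigenvalues are purely imaginary and simple if and only if $$gk_1<\omega^2<-\frac{g}{8}\frac{(k_1-k_2)^2}{k_1+k_2}.$$ (iii) If $k_1<-k_2$ and $3k_1+k_2<0$, then for no $\omega$ are all eigenvalues purely imaginary and simple.
   Context: The eigenvalues are the roots $\lambda$ of $(\lambda^2+gk_1-\omega^2)(\lambda^2+gk_2-\omega^2)+4\omega^2\lambda^2=0$ (the model of a point mass near the bottom of a vessel rotating with angular velocity $\omega$, $k_1,k_2$ the curvatures of the vessel's surface at the equilibrium). *)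

(* Complex numbers: an arbitrary numClosedFieldType C
   (e.g. the complex numbers); the real parameters are real elements of C. *)
From HB Require Import structures.
From mathcomp Require Import all_boot all_order all_algebra.
Set Implicit Arguments. Unset Strict Implicit. Unset Printing Implicit Defensive.
Import Order.TTheory GRing.Theory Num.Theory.
Local Open Scope ring_scope.

(* characteristic polynomial of the rotating-vessel system:
   (l^2 + g k1 - w^2)(l^2 + g k2 - w^2) + 4 w^2 l^2 *)
Definition vessel_poly (C : numClosedFieldType) (g k1 k2 w : C) : {poly C} :=
  ('X^2 + (g * k1 - w ^+ 2)%:P) * ('X^2 + (g * k2 - w ^+ 2)%:P)
  + (4 * w ^+ 2)%:P * 'X^2.

Definition all_pure_imag_simple (C : numClosedFieldType) (p : {poly C}) : Prop :=
  forall l : C, root p l -> 'Re l = 0 /\ mup l p = 1%N.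

From HB Require Import structures.
From mathcomp Require Import all_boot all_order all_algebra ring.
Import Order.TTheory GRing.Theory Num.Theory.
Local Open Scope ring_scope.

(* The characteristic polynomial of the rotating-vessel system is the
   biquadratic  X^4 + s X^2 + p  with
     s = g (k1 + k2) + 2 w^2,   p = (g k1 - w^2)(g k2 - w^2).
   Its roots are the square roots of the two roots m1, m2 of the quadratic
   m^2 + s m + p.  A root l is purely imaginary exactly when l^2 is a
   non-positive real, and it is simple exactly when the derivative
   2 l (2 l^2 + s) does not vanish at l.  Hence all roots are purely
   imaginary and simple iff m1, m2 are distinct negative reals, i.e. iff
     0 < s,  0 < p  and  0 < s^2 - 4 p            (biquad_pure_imag_simpleP).
   For the vessel these three conditions read (vessel_criterion)
     0 < g (k1 + k2) + 2 w^2,   g k1 < w^2,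
     0 < g^2 (k1 - k2)^2 + 8 g w^2 (k1 + k2),
   and the three cases of the theorem are elementary inequality reasoning
   on them, according to the signs of k1 + k2 and 3 k1 + k2. *)

Lemma simple_rootP {F : fieldType} {q : {poly F}} {l : F} :
  q != 0 -> root q l -> (mup l q = 1)%N <-> ~~ root q^`() l.
Proof.
move=> q0 /factor_theorem [r q_eq]; subst q.
have r0 : r != 0 by apply: contraNneq q0 => ->; rewrite mul0r.
have X0 : 'X - l%:P != 0 by rewrite polyXsubC_eq0.
have -> : root (r * ('X - l%:P))^`() l = root r l.
  by rewrite /root derivM derivXsubC !hornerE subrr mulr0 add0r ?mulr1.
have mupX : mup l ('X - l%:P) = 1%N by rewrite (@mup_XsubCX _ 1) eqxx.
have [rl|rNl] /= := boolP (root r l); last by rewrite mupMr // mupX.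
have mup_r : (0 < mup l r)%N by rewrite -XsubC_dvd // dvdp_XsubCl.
by rewrite mupM // mupX addn1; split=> // -[r_eq]; rewrite r_eq in mup_r.
Qed.

Lemma sqr_le0_of_Re_eq0 {C : numClosedFieldType} (l : C) :
  'Re l = 0 -> l ^+ 2 <= 0.
Proof.
move=> Re0; rewrite (Crect l) Re0 add0r exprMn sqrCi mulN1r oppr_le0.
by rewrite -realEsqr Creal_Im.
Qed.

Lemma Re_eq0_of_sqr_lt0 {C : numClosedFieldType} (l : C) :
  l ^+ 2 < 0 -> 'Re l = 0.
Proof.
move=> l2_lt0.
have : (l^*) ^+ 2 == l ^+ 2.
  by rewrite -rmorphXn; apply/eqP/CrealP; exact: ltr0_real.
rewrite eqf_sqr => /orP [/eqP conj_l | /eqP conj_l]; last first.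
  by rewrite ReE conj_l subrr mul0r.
have : l \is Num.real by rewrite CrealE conj_l.
by rewrite realEsqr => /le_lt_trans/(_ l2_lt0); rewrite ltxx.
Qed.

Definition biquad {F : fieldType} (s p : F) : {poly F} :=
  'X^4 + s%:P * 'X^2 + p%:P.

(* Its coefficient of X^4 is 1, so it is never the zero polynomial. *)
Lemma biquad_neq0 {F : fieldType} (s p : F) : biquad s p != 0.
Proof.
apply/eqP => /(congr1 (coefp 4)) /eqP.
by rewrite /= !coefE /= mulr0 !addr0 oner_eq0.
Qed.

Lemma horner_deriv_biquad {F : fieldType} (s p x : F) :
  (biquad s p)^`().[x] = 2 * x * (2 * x ^+ 2 + s).
Proof. rewrite /biquad !derivE !hornerE /=; ring. Qed.

Section Biquadratic.
Variables (C : numClosedFieldType) (s p : C).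

(* The roots of the quadratic m^2 + s m + p, written with the square root
   r of the discriminant. *)
Let r := sqrtC (s ^+ 2 - 4 * p).
Let m1 := (r - s) / 2.
Let m2 := (- r - s) / 2.

Let r_sqr : r ^+ 2 = s ^+ 2 - 4 * p.
Proof. exact: sqrtCK. Qed.

Let m12_sum : m1 + m2 = - s.
Proof. by rewrite /m1 /m2; field. Qed.

Let m12_prod : m1 * m2 = p.
Proof.
transitivity ((s ^+ 2 - r ^+ 2) / 4); first by rewrite /m1 /m2; field.
by rewrite r_sqr; field.
Qed.

Let m1_deriv : 2 * m1 + s = r.
Proof. by rewrite /m1; field. Qed.

Let m2_deriv : 2 * m2 + s = - r.
Proof. by rewrite /m2; field. Qed.

Lemma horner_biquad x : (biquad s p).[x] = (x ^+ 2 - m1) * (x ^+ 2 - m2).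
Proof.
rewrite /biquad !hornerE /= -m12_prod.
have -> : s = - (m1 + m2) by rewrite m12_sum opprK.
ring.
Qed.

Let root_sqrt_m1 : root (biquad s p) (sqrtC m1).
Proof. by rewrite /root horner_biquad sqrtCK subrr mul0r. Qed.

Let root_sqrt_m2 : root (biquad s p) (sqrtC m2).
Proof. by rewrite /root horner_biquad sqrtCK subrr mulr0. Qed.

(* Sufficiency: if m1 and m2 are distinct negative reals, every root l has
   l^2 in {m1, m2}, so it is purely imaginary, nonzero, and
   2 l^2 + s = +-r does not vanish. *)
Lemma biquad_pure_imag_simple_suff :
  0 < s -> 0 < p -> 0 < s ^+ 2 - 4 * p -> all_pure_imag_simple (biquad s p).
Proof.
move=> s_gt0 p_gt0 disc_gt0 l root_l.
have r_gt0 : 0 < r by rewrite sqrtC_gt0.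
have s_gt_r : r < s.
  have : 0 < (s - r) * (s + r).
    have -> : (s - r) * (s + r) = 4 * p by rewrite -subr_sqr r_sqr; ring.
    by rewrite mulr_gt0 ?ltr0n.
  by rewrite (pmulr_lgt0 _ (addr_gt0 s_gt0 r_gt0)) subr_gt0.
have m1_lt0 : m1 < 0 by rewrite pmulr_llt0 ?invr_gt0 ?ltr0n // subr_lt0.
have m2_lt0 : m2 < 0.
  by rewrite pmulr_llt0 ?invr_gt0 ?ltr0n // -opprD oppr_lt0 addr_gt0.
have [l2_m|l2_m] : l ^+ 2 = m1 \/ l ^+ 2 = m2.
  move: root_l; rewrite /root horner_biquad mulf_eq0 !subr_eq0.
  by case/orP => /eqP; [left | right].
all: have l2_lt0 : l ^+ 2 < 0 by rewrite l2_m.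
all: have l_neq0 : l != 0
       by apply: contraTneq l2_lt0 => ->; rewrite expr0n ltxx.
all: split; first exact: Re_eq0_of_sqr_lt0.
all: apply/(simple_rootP (biquad_neq0 s p) root_l).
all: rewrite /root horner_deriv_biquad l2_m ?m1_deriv ?m2_deriv.
all: by rewrite !mulf_neq0 ?oppr_eq0 ?pnatr_eq0 ?(gt_eqF r_gt0).
Qed.

(* Necessity: the roots sqrtC m1, sqrtC m2 are purely imaginary, so m1 and
   m2 are non-positive reals; simplicity at 0 and at sqrtC m1 rules out
   p = m1 m2 = 0 and r = 2 m1 + s = 0. *)
Lemma biquad_pure_imag_simple_nec :
  all_pure_imag_simple (biquad s p) -> [/\ 0 < s, 0 < p & 0 < s ^+ 2 - 4 * p].
Proof.
move=> pure_simple.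
have deriv_neq0 l : root (biquad s p) l -> 2 * l * (2 * l ^+ 2 + s) != 0.
  move=> root_l; have [_ /(simple_rootP (biquad_neq0 s p) root_l)] :=
    pure_simple l root_l.
  by rewrite /root horner_deriv_biquad.
have sqr_le0 m : root (biquad s p) (sqrtC m) -> m <= 0.
  by move=> /pure_simple [/sqr_le0_of_Re_eq0]; rewrite sqrtCK.
have m1_le0 := sqr_le0 _ root_sqrt_m1; have m2_le0 := sqr_le0 _ root_sqrt_m2.
have p_neq0 : p != 0.
  apply/negP => /eqP p0.
  have root0 : root (biquad s p) 0.
    by rewrite /root horner_biquad expr0n !sub0r mulrNN m12_prod p0.
  by move: (deriv_neq0 0 root0); rewrite mulr0 mul0r eqxx.
have m1_lt0 : m1 < 0.
  rewrite lt_neqAle m1_le0 andbT; apply: contraNneq p_neq0 => m1_0.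
  by rewrite -m12_prod m1_0 mul0r.
have m2_lt0 : m2 < 0.
  rewrite lt_neqAle m2_le0 andbT; apply: contraNneq p_neq0 => m2_0.
  by rewrite -m12_prod m2_0 mulr0.
have r_neq0 : r != 0.
  apply: contraNneq (deriv_neq0 _ root_sqrt_m1) => r0.
  by rewrite sqrtCK m1_deriv r0 mulr0.
have r_real : r \is Num.real.
  by rewrite (_ : r = m1 - m2) ?rpredB ?ltr0_real //; rewrite /m1 /m2; field.
split.
- by rewrite -[s]opprK -m12_sum opprD addr_gt0 ?oppr_gt0.
- by rewrite -m12_prod -mulrNN mulr_gt0 // oppr_gt0.
- by rewrite -r_sqr lt_def expf_neq0 //= -realEsqr.
Qed.

Lemma biquad_pure_imag_simpleP :
  all_pure_imag_simple (biquad s p) <-> [/\ 0 < s, 0 < p & 0 < s ^+ 2 - 4 * p].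
Proof.
split; first exact: biquad_pure_imag_simple_nec.
by case; exact: biquad_pure_imag_simple_suff.
Qed.

End Biquadratic.

Lemma vessel_poly_biquad (C : numClosedFieldType) (g k1 k2 w : C) :
  vessel_poly g k1 k2 w =
  biquad (g * (k1 + k2) + 2 * w ^+ 2) ((g * k1 - w ^+ 2) * (g * k2 - w ^+ 2)).
Proof.
rewrite /vessel_poly /biquad (_ : g * (k1 + k2) + 2 * w ^+ 2 =
  (g * k1 - w ^+ 2) + (g * k2 - w ^+ 2) + 4 * w ^+ 2); last by ring.
by rewrite !polyCD polyCM; ring.
Qed.

Section Vessel.
Variables (C : numClosedFieldType) (g k1 k2 : C).
Hypotheses (g_gt0 : 0 < g) (k2_lt0 : k2 < 0) (k1_gt0 : 0 < k1).

Lemma vessel_criterion (w : C) : w \is Num.real ->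
  all_pure_imag_simple (vessel_poly g k1 k2 w) <->
  [/\ 0 < g * (k1 + k2) + 2 * w ^+ 2, g * k1 < w ^+ 2 &
      0 < g ^+ 2 * (k1 - k2) ^+ 2 + 8 * g * w ^+ 2 * (k1 + k2)].
Proof.
move=> w_real; rewrite vessel_poly_biquad biquad_pure_imag_simpleP.
have w2_ge0 : 0 <= w ^+ 2 by rewrite -realEsqr.
have gk2_lt : g * k2 - w ^+ 2 < 0.
  by rewrite subr_lt0 (lt_le_trans _ w2_ge0) // pmulr_rlt0.
have -> : (0 < (g * k1 - w ^+ 2) * (g * k2 - w ^+ 2)) = (g * k1 < w ^+ 2).
  by rewrite nmulr_lgt0 // subr_lt0.
suff -> : (g * (k1 + k2) + 2 * w ^+ 2) ^+ 2
          - 4 * ((g * k1 - w ^+ 2) * (g * k2 - w ^+ 2))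
        = g ^+ 2 * (k1 - k2) ^+ 2 + 8 * g * w ^+ 2 * (k1 + k2) by [].
ring.
Qed.

(* Case (i), k1 + k2 > 0: the other two conditions follow from g k1 < w^2. *)
Lemma vessel_stable_sum_pos (w : C) : - k2 < k1 -> w \is Num.real ->
  all_pure_imag_simple (vessel_poly g k1 k2 w) <-> g * k1 < w ^+ 2.
Proof.
move=> k12 w_real; rewrite vessel_criterion //.
have k12_gt0 : 0 < k1 + k2 by rewrite -(opprK k2) subr_gt0.
split=> [[] // | gk1_lt].
have w2_gt0 : 0 < w ^+ 2 by rewrite (lt_trans _ gk1_lt) ?mulr_gt0.
have k1_gt_k2 : 0 < k1 - k2 by rewrite subr_gt0 (lt_trans k2_lt0 k1_gt0).
(* Abstract w^2 so that mulr_gt0 treats it as a single positive factor. *)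
split=> //; move: (w ^+ 2) w2_gt0 => W W_gt0.
  by rewrite addr_gt0 ?mulr_gt0 ?ltr0n.
by rewrite addr_gt0 ?mulr_gt0 ?exprn_gt0 ?ltr0n.
Qed.

Lemma vessel_discriminant_bound (w : C) : k1 + k2 < 0 ->
  (w ^+ 2 < - (g / 8) * ((k1 - k2) ^+ 2 / (k1 + k2))) =
  (0 < g ^+ 2 * (k1 - k2) ^+ 2 + 8 * g * w ^+ 2 * (k1 + k2)).
Proof.
move=> k12_lt0.
have den_gt0 : 0 < 8 * g * - (k1 + k2) by rewrite !mulr_gt0 ?ltr0n ?oppr_gt0.
rewrite -subr_gt0 (_ : _ - _ =
    (g ^+ 2 * (k1 - k2) ^+ 2 + 8 * g * w ^+ 2 * (k1 + k2))
    / (8 * g * - (k1 + k2))).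
  by rewrite pmulr_lgt0 // invr_gt0.
by field; rewrite ltr0_neq0 // gt_eqF.
Qed.

(* Case (ii), k1 + k2 < 0 < 3 k1 + k2: the positivity of the trace follows
   from g k1 < w^2, since
   g (k1 + k2) + 2 w^2 = g (3 k1 + k2) + 2 (w^2 - g k1). *)
Lemma vessel_stable_window (w : C) : k1 < - k2 -> 0 < 3 * k1 + k2 ->
  w \is Num.real ->
  all_pure_imag_simple (vessel_poly g k1 k2 w) <->
  g * k1 < w ^+ 2 /\ w ^+ 2 < - (g / 8) * ((k1 - k2) ^+ 2 / (k1 + k2)).
Proof.
move=> k12 k13_gt0 w_real.
have k12_lt0 : k1 + k2 < 0 by rewrite -(opprK k2) subr_lt0.
rewrite vessel_criterion // vessel_discriminant_bound //.
split=> [[] // | [gk1_lt disc_gt0]]; split=> //.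
rewrite (_ : _ + _ = g * (3 * k1 + k2) + 2 * (w ^+ 2 - g * k1)); last by ring.
by rewrite addr_gt0 ?mulr_gt0 ?ltr0n ?subr_gt0.
Qed.

(* Case (iii), 3 k1 + k2 < 0: positivity of the trace and of the
   discriminant are incompatible, since a positive combination of them is
   g^2 (-k1 - 3 k2)(3 k1 + k2) < 0. *)
Lemma vessel_never_stable (w : C) : k1 < - k2 -> 3 * k1 + k2 < 0 ->
  w \is Num.real -> ~ all_pure_imag_simple (vessel_poly g k1 k2 w).
Proof.
move=> k12 k13_lt0 w_real.
rewrite vessel_criterion // => -[trace_gt0 _ disc_gt0].
have k12_lt0 : k1 + k2 < 0 by rewrite -(opprK k2) subr_lt0.
have k_gt0 : 0 < - k1 - 3 * k2.
  rewrite (_ : _ - _ = 3 * - (3 * k1 + k2) + 8 * k1); last by ring.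
  by rewrite addr_gt0 ?mulr_gt0 ?ltr0n ?oppr_gt0.
have : 0 < g ^+ 2 * (k1 - k2) ^+ 2 + 8 * g * w ^+ 2 * (k1 + k2)
           + 4 * g * - (k1 + k2) * (g * (k1 + k2) + 2 * w ^+ 2).
  by rewrite addr_gt0 // !mulr_gt0 ?ltr0n ?oppr_gt0.
rewrite (_ : _ + _ = g ^+ 2 * ((- k1 - 3 * k2) * (3 * k1 + k2))); last by ring.
by rewrite lt_gtF // !pmulr_rlt0 ?exprn_gt0.
Qed.

End Vessel.

Theorem mainTheorem7 (C : numClosedFieldType) (g k1 k2 : C)
  (hg : 0 < g) (hk2 : k2 < 0) (hk1 : 0 < k1) :
  (k1 > - k2 ->
     forall w : C, w \is Num.real ->
       (all_pure_imag_simple (vessel_poly g k1 k2 w) <-> (g * k1 < w ^+ 2))) /\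
  (k1 < - k2 -> 0 < 3 * k1 + k2 ->
     forall w : C, w \is Num.real ->
       (all_pure_imag_simple (vessel_poly g k1 k2 w) <->
        g * k1 < w ^+ 2 /\ w ^+ 2 < - (g / 8) * ((k1 - k2) ^+ 2 / (k1 + k2)))) /\
  (k1 < - k2 -> 3 * k1 + k2 < 0 ->
     forall w : C, w \is Num.real ->
       ~ all_pure_imag_simple (vessel_poly g k1 k2 w)).
Proof.
split; last split.
- by move=> k12 w; exact: vessel_stable_sum_pos.
- by move=> k12 k13 w; exact: vessel_stable_window.
- by move=> k12 k13 w; exact: vessel_never_stable.
Qed.
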